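(* Let $\rho$ be a finitary type and $\mathsf H$ a class of $\rho$-algebras. Then $\mathrm{Mod}(\mathrm{Th}(\mathsf H^\top))=\mathrm{Mod}(\mathrm{Str}(\rho)\cup\mathrm{Th}(\mathsf H)^\bullet)$, where $\mathrm{Th}(\mathsf H)^\bullet=\{t^\bullet=u^\bullet: (t=u)\in\mathrm{Th}(\mathsf H)\}$.
   Context: $\rho$ is a finitary type; $\rho_\bullet$ has the same symbols, each of arity $\omega$. For $f:A^n\to A$, $f^\top(s)=f(s_0,\dots,s_{n-1})$; $\mathbf S^\top$ is the $\rho_\bullet$-algebra on $S$ with operations $(f^{\mathbf S})^\top$; $\mathsf H^\top=\{\mathbf S^\top:\mathbf S\in\mathsf H\}$. Let $V=\{e_0,e_1,\dots\}$. $\mathrm{Th}(\mathsf H)$ is the set of identities between $\rho$-terms over $V$ valid in all members of $\mathsf H$; $\rho_\bullet$-terms over $V$ are well-founded countably branching terms, and $\mathrm{Th}(\mathsf H^\top)$ is the set of identities between $\rho_\bullet$-terms over $V$ valid in all members of $\mathsf H^\top$; $\mathrm{Mod}(\Sigma)$ is the class of $\rho_\bullet$-algebras satisfying $\Sigma$. Define $(-)^\circ$ from $\rho_\bullet$-terms to $\rho$-terms by $e_i^\circ=e_i$, $f(t_0,t_1,\dots)^\circ=f(t_0^\circ,\dots,t_{n-1}^\circ)$ for $f$ of arity $n$ in $\rho$; and $(-)^\bullet$ from $\rho$-terms to $\rho_\bullet$-terms by $e_i^\bullet=e_i$, $f(t_0,\dots,t_{n-1})^\bullet=f(t_0^\bullet,\dots,t_{n-1}^\bullet,e_n,e_{n+1},\dots)$.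 $\mathrm{Str}(\rho)$ is the set of identities $t=(t^\circ)^\bullet$ for all $\rho_\bullet$-terms $t$. *)

From mathcomp Require Import all_boot.
Set Implicit Arguments. Unset Strict Implicit. Unset Printing Implicit Defensive.

Record ftype := FType { sym : Type; ar : sym -> nat }.

Section Defs.
Variable rho : ftype.

(* rho-terms over V = {e_0, e_1, ...} (variable e_i is [Var i]). *)
Inductive term : Type :=
| Var : nat -> term
| App : forall f : sym rho, ('I_(ar f) -> term) -> term.

(* rho_bullet-terms: same symbols, each of arity omega; well-founded,
   countably branching. *)
Inductive bterm : Type :=
| BVar : nat -> bterm
| BApp : sym rho -> (nat -> bterm) -> bterm.

Definition ops (A : Type) := forall f : sym rho, ('I_(ar f) -> A) -> A.
Definition bops (A : Type) := sym rho -> (nat -> A) -> A.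

Fixpoint eval (A : Type) (opsA : ops A) (v : nat -> A) (t : term) : A :=
  match t with
  | Var i => v i
  | App f ts => opsA f (fun j => eval opsA v (ts j))
  end.

Fixpoint beval (A : Type) (opsA : bops A) (v : nat -> A) (t : bterm) : A :=
  match t with
  | BVar i => v i
  | BApp f ts => opsA f (fun k => beval opsA v (ts k))
  end.

Definition top (A : Type) (opsA : ops A) : bops A :=
  fun f s => opsA f (fun j : 'I_(ar f) => s (nat_of_ord j)).

Definition sat (A : Type) (opsA : ops A) (t u : term) : Prop :=
  forall v : nat -> A, eval opsA v t = eval opsA v u.
Definition bsat (A : Type) (opsA : bops A) (t u : bterm) : Prop :=
  forall v : nat -> A, beval opsA v t = beval opsA v u.

Definition aclass := forall A : Type, ops A -> Prop.

Definition Th (H : aclass) (t u : term) : Prop :=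
  forall (A : Type) (opsA : ops A), H A opsA -> sat opsA t u.
Definition ThTop (H : aclass) (t u : bterm) : Prop :=
  forall (A : Type) (opsA : ops A), H A opsA -> bsat (top opsA) t u.

Fixpoint circ (t : bterm) : term :=
  match t with
  | BVar i => Var i
  | BApp f ts => App (fun j : 'I_(ar f) => circ (ts (nat_of_ord j)))
  end.

(* (-)^bullet : f(t_0,...,t_{n-1})^bullet = f(t_0^bullet,...,t_{n-1}^bullet, e_n, e_{n+1}, ...) *)
Fixpoint bullet (t : term) : bterm :=
  match t with
  | Var i => BVar i
  | App f ts => BApp f (fun k => match @insub nat (fun k => k < ar f) 'I_(ar f) k with
                                 | Some j => bullet (ts j)
                                 | None => BVar k
                                 end)
  end.

Definition ModThTop (H : aclass) (B : Type) (opsB : bops B) : Prop :=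
  forall t u, ThTop H t u -> bsat opsB t u.

Definition ModStrTh (H : aclass) (B : Type) (opsB : bops B) : Prop :=
  (forall t : bterm, bsat opsB t (bullet (circ t))) /\
  (forall t u : term, Th H t u -> bsat opsB (bullet t) (bullet u)).

End Defs.

From mathcomp Require Import all_boot.
From Stdlib Require Import FunctionalExtensionality.

(* In an algebra S^top a rho_bullet-term t acts as the rho-term t^circ, and
   t^bullet acts as t. Hence Th(H^top) consists of the identities t = u with
   (t^circ = u^circ) in Th(H); it contains Str(rho) and Th(H)^bullet, and
   conversely Str(rho) rewrites any such t = u into (t^circ)^bullet =
   (u^circ)^bullet, an instance of Th(H)^bullet. *)

Section TopEvaluation.
Variables (rho : ftype) (A : Type) (opsA : ops rho A).

Lemma beval_top_circ (v : nat -> A) (t : bterm rho) :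
  beval (top opsA) v t = eval opsA v (circ t).
Proof.
elim: t => [i|f ts IH] //=.
by rewrite /top; congr (opsA f); apply: functional_extensionality => j.
Qed.

(* The padding variables e_n, e_{n+1}, ... of t^bullet are never read by f^top. *)
Lemma beval_top_bullet (v : nat -> A) (t : term rho) :
  beval (top opsA) v (bullet t) = eval opsA v t.
Proof.
elim: t => [i|f ts IH] //=.
rewrite /top; congr (opsA f); apply: functional_extensionality => j.
by rewrite valK IH.
Qed.

End TopEvaluation.

Section TheoryOfTop.
Variables (rho : ftype) (H : aclass rho).

Lemma ThTopE (t u : bterm rho) : ThTop H t u <-> Th H (circ t) (circ u).
Proof.
split=> Htu A opsA HA v; last by rewrite !beval_top_circ; apply: Htu.
by rewrite -!beval_top_circ; apply: Htu.
Qed.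

Lemma ThTop_str (t : bterm rho) : ThTop H t (bullet (circ t)).
Proof. by move=> A opsA _ v; rewrite beval_top_circ beval_top_bullet. Qed.

Lemma ThTop_bullet (t u : term rho) : Th H t u -> ThTop H (bullet t) (bullet u).
Proof. by move=> Htu A opsA HA v; rewrite !beval_top_bullet; apply: Htu. Qed.

End TheoryOfTop.

Theorem lemma7p6 (rho : ftype) (H : aclass rho) :
  forall (B : Type) (opsB : bops rho B),
    ModThTop H opsB <-> ModStrTh H opsB.
Proof.
move=> B opsB; split=> [Mod | [Str ThBullet] t u /ThTopE Htu v].
  split=> [t | t u /ThTop_bullet]; apply: Mod; exact: ThTop_str.
by rewrite (Str t v) (Str u v); apply: ThBullet.
Qed.
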